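(* Let $c\in\mathbb{R}$, $\sigma^2>0$, $\gamma=0$, and $\alpha_0=1$. Define recursively, for $n\ge2$, $$\alpha_{n-1}=\frac{\lambda^{n-1}\sigma^2+(1-\delta^{n-1})^2c^2}{\lambda^{n-1}\sigma^2+(1-\delta^{n-1})^2c^2+\sigma^2},$$ where $\delta^1=\alpha_0$, $\lambda^1=\alpha_0^2$, and for $m>1$, $\delta^m=\alpha_{m-1}+(1-\alpha_{m-1})\delta^{m-1}$, $\lambda^m=\alpha_{m-1}^2+(1-\alpha_{m-1})^2\lambda^{m-1}$. Then $\alpha_{n-1}=\frac1n$ for all $n\ge1$.
   Context: This is the prediction-error-minimizing stepsize rule for approximate value iteration in a single-state, single-action problem with i.i.d. rewards of mean $c$ and variance $\sigma^2$, specialized to discount factor $\gamma=0$ (the stationary case). *)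

(* gamma = 0 (stationary case) specialization of the
   prediction-error-minimizing stepsize rule. *)
From mathcomp Require Import all_boot all_order all_algebra.
Set Implicit Arguments. Unset Strict Implicit. Unset Printing Implicit Defensive.
Import Order.TTheory GRing.Theory Num.Theory.
Local Open Scope ring_scope.

(* step c s2 k = (alpha_k, delta^(k+1), lambda^(k+1)), where s2 = sigma^2.
   alpha_0 = 1, delta^1 = alpha_0, lambda^1 = alpha_0^2;
   alpha_(k+1) = (lambda^(k+1) s2 + (1 - delta^(k+1))^2 c^2)
               / (lambda^(k+1) s2 + (1 - delta^(k+1))^2 c^2 + s2);
   delta^(m)  = alpha_(m-1) + (1 - alpha_(m-1)) delta^(m-1)      (m > 1);
   lambda^(m) = alpha_(m-1)^2 + (1 - alpha_(m-1))^2 lambda^(m-1)  (m > 1). *)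
Fixpoint step (R : fieldType) (c s2 : R) (k : nat) : R * R * R :=
  match k with
  | 0%N => let a0 : R := 1 in (a0, a0, a0 ^+ 2)
  | k'.+1 =>
      let '(_, d, l) := step c s2 k' in
      let num := l * s2 + (1 - d) ^+ 2 * c ^+ 2 in
      let a := num / (num + s2) in
      (a, a + (1 - a) * d, a ^+ 2 + (1 - a) ^+ 2 * l)
  end.

Definition alpha (R : fieldType) (c s2 : R) (k : nat) : R := (step c s2 k).1.1.
Definition delta (R : fieldType) (c s2 : R) (m : nat) : R := (step c s2 m.-1).1.2.
Definition lambda (R : fieldType) (c s2 : R) (m : nat) : R := (step c s2 m.-1).2.

From mathcomp Require Import all_boot all_order all_algebra.
From mathcomp Require Import ring.
Import Order.TTheory GRing.Theory Num.Theory.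
Local Open Scope ring_scope.

(* With the stepsizes 1/(k+1) the iterate is the sample mean, so delta^m = 1
   (no bias, the c^2 term vanishes) and lambda^m = 1/m (the variance of a mean
   of m samples, in units of sigma^2); the rule then picks
   (sigma^2/m) / (sigma^2/m + sigma^2) = 1/(m+1), closing the induction. *)

Lemma mean_variance_stepsize (R : fieldType) (s x : R) :
  s != 0 -> x != 0 -> x + 1 != 0 -> x^-1 * s / (x^-1 * s + s) = (x + 1)^-1.
Proof.
move=> s0 x0 x1; field.
by rewrite x0 x1 -[s in s + _]mulr1 -mulrDr mulf_neq0 // addrC.
Qed.

Lemma mean_variance_update (R : fieldType) (x : R) :
  x != 0 -> x + 1 != 0 -> (x + 1)^-1 ^+ 2 + (1 - (x + 1)^-1) ^+ 2 * x^-1 = (x + 1)^-1.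
Proof. by move=> x0 x1; field; rewrite x0 x1. Qed.

Lemma step_closed_form (R : numFieldType) (c s2 : R) (k : nat) :
  s2 != 0 -> step c s2 k = ((k.+1%:R)^-1, 1, (k.+1%:R)^-1).
Proof.
move=> s0; elim: k => [|k IH] /=; first by rewrite invr1 expr1n.
have k1 : k.+1%:R != 0 :> R by rewrite pnatr_eq0.
have k2 : k.+1%:R + 1 != 0 :> R by rewrite natr1 pnatr_eq0.
rewrite IH subrr expr0n mul0r addr0 mean_variance_stepsize //.
by rewrite mulr1 subrKC mean_variance_update // natr1.
Qed.

Theorem corollary3 (R : realFieldType) (c sigma2 : R) (hs : 0 < sigma2) (n : nat) :
  (1 <= n)%N -> alpha c sigma2 n.-1 = 1 / n%:R.
Proof.
case: n => // n _.
by rewrite /alpha step_closed_form ?gt_eqF //= div1r.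
Qed.
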